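(* Let $n\ge2$ and $\alpha\in\mathbb{Z}_2^n$. Then $$\max_{\beta,\gamma\in\mathbb{Z}_2^n}\mathrm{adp}^{\mathrm{XR}}_1(\alpha,\beta\to\gamma)=\mathrm{adp}^{\oplus}(\alpha,\alpha\to0)=\max_{\beta,\gamma\in\mathbb{Z}_2^n}\mathrm{adp}^{\oplus}(\alpha,\beta\to\gamma).$$
   Context: For $x\in\mathbb{Z}_2^n$, $x=(x_0,\dots,x_{n-1})$ is identified with the integer $\sum_i x_i2^{n-1-i}$; $+$ is addition modulo $2^n$, $\oplus$ is bitwise XOR, $x\lll r=(x_r,\dots,x_{n-1},x_0,\dots,x_{r-1})$. For $f:(\mathbb{Z}_2^n)^2\to\mathbb{Z}_2^n$, $\mathrm{adp}^f(\alpha,\beta\to\gamma)=4^{-n}\#\{(x,y): f(x+\alpha,y+\beta)=f(x,y)+\gamma\}$. $\mathrm{adp}^{\oplus}$ is this for $f(x,y)=x\oplus y$, and $\mathrm{adp}^{\mathrm{XR}}_r$ for $f(x,y)=(x\oplus y)\lll r$. *)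

From mathcomp Require Import all_boot all_order all_algebra.
Set Implicit Arguments. Unset Strict Implicit. Unset Printing Implicit Defensive.
Import Order.TTheory GRing.Theory Num.Theory.

(* Elements of Z_2^n are represented by their integer value x < 2^n,
   where x = sum_i x_i 2^(n-1-i), i.e. x_0 is the most significant bit. *)

Definition bit (n x i : nat) : bool := odd (x %/ 2 ^ (n.-1 - i)).

Definition addv (n x y : nat) : nat := (x + y) %% 2 ^ n.

Definition xorv (n x y : nat) : nat :=
  \sum_(i < n) (bit n x i (+) bit n y i) * 2 ^ (n.-1 - i).

Definition rotl (n r x : nat) : nat :=
  \sum_(i < n) bit n x ((i + r) %% n) * 2 ^ (n.-1 - i).

Definition xr (n r x y : nat) : nat := rotl n r (xorv n x y).

Definition adp (n : nat) (f : nat -> nat -> nat) (a b g : nat) : rat :=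
  (#|[set p : 'I_(2 ^ n) * 'I_(2 ^ n) |
       f (addv n p.1 a) (addv n p.2 b) == addv n (f p.1 p.2) g]|)%:R
  / (4 ^ n)%:R.

(* max over beta, gamma in Z_2^n (all adp values are >= 0, so 0 is a
   neutral bottom for the max) *)
Definition max_adp (n : nat) (f : nat -> nat -> nat) (a : nat) : rat :=
  \big[Num.max/0%R]_(b < 2 ^ n) \big[Num.max/0%R]_(g < 2 ^ n) adp n f a b g.

From mathcomp Require Import all_boot all_order all_algebra.
From mathcomp Require Import zify.
Set Implicit Arguments. Unset Strict Implicit. Unset Printing Implicit Defensive.
Import Order.TTheory GRing.Theory Num.Theory.

(* Read the differential equation of x xor y from the least significant bit upwards:
   all that survives from one bit position to the next are the three carries c, e, d of
   the additions x + a, y + b and (x xor y) + g.  A parity condition kills every bit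
   position at which an odd number of these carries differ from the corresponding bit of
   a, b, g; where none differ, the four choices of the bits of x and y keep the same
   carries, and where two differ, these two carries take all four values.  Hence the
   solution counts obey a recursion dominated by a function carry_bound of a alone, which
   is reached for b = a and g = 0.  For both f = xor and f = (xor) <<< 1 the count on
   m + 1 bits splits into four counts on m bits whose top carries are constrained by a
   predicate T that flips with the parity of either of its first two arguments; this is
   all the recursion needs. *)

Lemma modn_pow2S x m : x %% 2 ^ m.+1 = odd (x %/ 2 ^ m) * 2 ^ m + x %% 2 ^ m.
Proof.
have p2 : 2 ^ m %| 2 ^ m.+1 by rewrite dvdn_exp2l.
rewrite {1}(divn_eq (x %% 2 ^ m.+1) (2 ^ m)) (modn_dvdm _ p2).
by rewrite -modn2 modn_divl -expnS.
Qed.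

Lemma eqn_mod_pow2S v w m :
  (v %% 2 ^ m.+1 == w %% 2 ^ m.+1) =
  (v %% 2 ^ m == w %% 2 ^ m) && (odd (v %/ 2 ^ m) == odd (w %/ 2 ^ m)).
Proof.
have pos : 0 < 2 ^ m by rewrite expn_gt0.
have lt_v := ltn_pmod v pos; have lt_w := ltn_pmod w pos.
rewrite !modn_pow2S andbC; apply/eqP/andP => [eq_vw|[/eqP -> /eqP ->] //].
have := congr1 (divn^~ (2 ^ m)) eq_vw; have := congr1 (modn^~ (2 ^ m)) eq_vw.
rewrite /= !modnMDl !divnMDl // !modn_mod (divn_small lt_v) (divn_small lt_w) !addn0.
by move=> -> top; split=> //; move: top; case: (odd _); case: (odd _).
Qed.

Lemma odd_div_mod_pow2 p m k : k < m -> odd (p %% 2 ^ m %/ 2 ^ k) = odd (p %/ 2 ^ k).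
Proof.
move=> lt_km; have le_km := ltnW lt_km.
rewrite divn_modl; last by rewrite dvdn_exp2l.
by rewrite -expnB // odd_mod // oddX subn_eq0 leqNgt lt_km.
Qed.

Lemma sum_bits_mod x m : \sum_(k < m) odd (x %/ 2 ^ k) * 2 ^ k = x %% 2 ^ m.
Proof.
elim: m => [|m IH]; first by rewrite big_ord0 expn0 modn1.
by rewrite big_ord_recr /= IH modn_pow2S addnC.
Qed.

Lemma rotl1E m x : rotl m.+1 1 x = odd (x %/ 2 ^ m) + 2 * (x %% 2 ^ m).
Proof.
rewrite /rotl big_ord_recr /= addn1 modnn subnn muln1 /bit /= subn0 addnC.
congr (_ + _); rewrite -sum_bits_mod big_distrr (reindex_inj rev_ord_inj) /=.
apply: eq_bigr => i _; have lt_im := ltn_ord i.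
rewrite modn_small; last by lia.
have -> : m - (m - i.+1 + 1) = i by lia.
have -> : m - (m - i.+1) = i.+1 by lia.
by rewrite expnS mulnCA.
Qed.

Lemma odd_bit_double (r : bool) n : odd (r + 2 * n) = r.
Proof. by rewrite oddD oddM /=; case: r. Qed.

Lemma half_bit_double (r : bool) n : (r + 2 * n) %/ 2 = n.
Proof. by rewrite mulnC divnDMl //; case: r. Qed.

Lemma eq_bit_double (r s : bool) m n : (r + 2 * m == s + 2 * n) = (r == s) && (m == n).
Proof.
apply/eqP/andP => [eq_rs|[/eqP -> /eqP ->] //].
have := congr1 odd eq_rs; have := congr1 (divn^~ 2) eq_rs.
by rewrite /= !half_bit_double !odd_bit_double => -> ->.
Qed.

Lemma mod_bit_double (r : bool) n k : (r + 2 * n) %% 2 ^ k.+1 = r + 2 * (n %% 2 ^ k).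
Proof.
have lt_n := ltn_pmod n (expn_gt0 2 k).
have -> : r + 2 * n = n %/ 2 ^ k * 2 ^ k.+1 + (r + 2 * (n %% 2 ^ k)).
  by rewrite {1}(divn_eq n (2 ^ k)) expnS; lia.
by rewrite modnMDl modn_small // expnS; case: r; lia.
Qed.

Lemma div_bit_double (r : bool) n k : (r + 2 * n) %/ 2 ^ k.+1 = n %/ 2 ^ k.
Proof. by rewrite expnS divnMA half_bit_double. Qed.

(* The carry of x0 + odd a + c, the majority of the three bits, is written
   [if odd a (+) c then x0 else odd a]. *)
Lemma add_low_bit (x0 c : bool) x a : x0 + 2 * x + a + c =
  (x0 (+) odd a (+) c) + 2 * (x + a %/ 2 + (if odd a (+) c then x0 else odd a)).
Proof.
rewrite {1}(divn_eq a 2) modn2.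
by case: x0; case: (odd a); case: c => /=; lia.
Qed.

Lemma add_low_bit0 (x0 : bool) x a :
  x0 + 2 * x + a = (x0 (+) odd a) + 2 * (x + a %/ 2 + (odd a && x0)).
Proof. by have := add_low_bit x0 false x a; rewrite addn0 addbF; case: (odd a). Qed.

Lemma sum_nat_halves N (F : nat -> nat) :
  \sum_(0 <= x < 2 * N) F x = \sum_(t : bool) \sum_(0 <= x < N) F (t * N + x).
Proof.
rewrite big_bool /= (big_cat_nat _ (n := N)) //=; last by lia.
rewrite addnC -{1}[N]add0n big_addn mul2n -addnn addnK.
by congr (_ + _); apply: eq_bigr => x _; rewrite ?mul1n ?mul0n // addnC.
Qed.

Lemma sum_nat_parity N (F : nat -> nat) :
  \sum_(0 <= x < 2 * N) F x = \sum_(t : bool) \sum_(0 <= x < N) F (t + 2 * x).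
Proof.
rewrite big_bool /=; elim: N => [|N IH]; first by rewrite muln0 !big_geq.
have -> : 2 * N.+1 = (2 * N).+2 by lia.
by rewrite !big_nat_recr //= IH add0n add1n; lia.
Qed.

Lemma sum_pairs_split_top m (F : nat -> nat -> nat) :
  \sum_(0 <= x < 2 ^ m.+1) \sum_(0 <= y < 2 ^ m.+1) F x y =
  \sum_(xt : bool) \sum_(yt : bool)
    \sum_(0 <= x < 2 ^ m) \sum_(0 <= y < 2 ^ m) F (xt * 2 ^ m + x) (yt * 2 ^ m + y).
Proof.
rewrite expnS sum_nat_halves; apply: eq_bigr => xt _.
under eq_big_nat => x _ do rewrite sum_nat_halves.
exact: exchange_big.
Qed.

Lemma sum_bool2_addb (r s : bool) (F : bool -> bool -> nat) :
  \sum_(u : bool) \sum_(v : bool) F u v =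
  \sum_(u : bool) \sum_(v : bool) F (r (+) u) (s (+) v).
Proof. by rewrite !big_bool; case: r; case: s => /=; lia. Qed.

Lemma card_pairs N (P : nat -> nat -> bool) :
  #|[set p : 'I_N * 'I_N | P p.1 p.2]| = \sum_(0 <= x < N) \sum_(0 <= y < N) P x y.
Proof.
rewrite -sum1_card big_mkcond /=.
rewrite (eq_bigr (fun p : 'I_N * 'I_N => nat_of_bool (P p.1 p.2))); last first.
  by move=> p _; rewrite inE.
rewrite -(pair_bigA _ (fun i j : 'I_N => nat_of_bool (P i j))) big_mkord.
by apply: eq_bigr => i _; rewrite big_mkord.
Qed.

(* Unlike in [xorv], bits are indexed from the least significant one. *)
Definition lxor (m p q : nat) : nat :=
  \sum_(k < m) (odd (p %/ 2 ^ k) (+) odd (q %/ 2 ^ k)) * 2 ^ k.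

Lemma lxor0 p q : lxor 0 p q = 0.
Proof. by rewrite /lxor big_ord0. Qed.

Lemma lxorS m p q :
  lxor m.+1 p q = (odd p (+) odd q) + 2 * lxor m (p %/ 2) (q %/ 2).
Proof.
rewrite /lxor big_ord_recl /= expn0 !divn1 muln1 big_distrr; congr (_ + _).
by apply: eq_bigr => i _; rewrite /bump /= add1n expnS -!divnMA mulnCA.
Qed.

Lemma lxorSr m p q :
  lxor m.+1 p q = (odd (p %/ 2 ^ m) (+) odd (q %/ 2 ^ m)) * 2 ^ m + lxor m p q.
Proof. by rewrite /lxor big_ord_recr addnC. Qed.

Lemma lxor_lt m p q : lxor m p q < 2 ^ m.
Proof.
elim: m => [|m IH]; first by rewrite lxor0.
rewrite lxorSr expnS mul2n -addnn.
by case: (_ (+) _); rewrite ?mul1n ?mul0n ?ltn_add2l // ltn_addr.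
Qed.

Lemma lxor_mod m p q : lxor m (p %% 2 ^ m) (q %% 2 ^ m) = lxor m p q.
Proof. by apply: eq_bigr => k _; rewrite !odd_div_mod_pow2. Qed.

Lemma lxor_mulDl m s t p q : lxor m (s * 2 ^ m + p) (t * 2 ^ m + q) = lxor m p q.
Proof. by rewrite -lxor_mod !modnMDl lxor_mod. Qed.

Lemma xorvE n x y : xorv n x y = lxor n x y.
Proof.
rewrite /xorv /lxor (reindex_inj rev_ord_inj) /=; apply: eq_bigr => i _.
have lt_in := ltn_ord i.
by rewrite /bit; have -> : n.-1 - (n - i.+1) = i by lia.
Qed.

Lemma rotl1_lxor m p q :
  rotl m.+1 1 (lxor m.+1 p q) = (odd (p %/ 2 ^ m) (+) odd (q %/ 2 ^ m)) + 2 * lxor m p q.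
Proof.
rewrite rotl1E lxorSr divnMDl ?expn_gt0 // (divn_small (lxor_lt m p q)).
by rewrite addn0 oddb modnMDl (modn_small (lxor_lt m p q)).
Qed.

Fixpoint carry_bound (k a : nat) (c : bool) : nat :=
  if k is k'.+1 then
    if odd a (+) c then carry_bound k' (a %/ 2) false + carry_bound k' (a %/ 2) true
    else 4 * carry_bound k' (a %/ 2) (odd a)
  else 1.

Lemma carry_bound_le3 k a c : carry_bound k a c <= 3 * carry_bound k a (~~ c).
Proof.
elim: k a c => [//|k IH] a c /=.
have := IH (a %/ 2) false; have := IH (a %/ 2) true.
by case: (odd a); case: c => /=; lia.
Qed.

Lemma carry_bound_sum_le k a c :
  carry_bound k a false + carry_bound k a true <= 4 * carry_bound k a c.
Proof. by have := carry_bound_le3 k a (~~ c); case: c => /=; lia. Qed.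

Lemma carry_bound_sumS k a :
  carry_bound k.+1 a false + carry_bound k.+1 a true =
  4 * carry_bound k (a %/ 2) (odd a) +
  (carry_bound k (a %/ 2) false + carry_bound k (a %/ 2) true).
Proof. by rewrite /=; case: (odd a) => /=; lia. Qed.

Section CarryCount.

Variable T : nat -> nat -> nat -> bool.

(* The m low bits of the differential equation for x, y < 2 ^ m, with carries c, e, d
   entering the additions x + a, y + b, (x xor y) + g, and T applied to the parts of the
   three sums above bit m. *)
Definition carry_ok (m a b g : nat) (c e d : bool) (x y : nat) : bool :=
  (lxor m (x + a + c) (y + b + e) == (lxor m x y + g + d) %% 2 ^ m) &&
  T ((x + a + c) %/ 2 ^ m) ((y + b + e) %/ 2 ^ m) ((lxor m x y + g + d) %/ 2 ^ m).

Definition carry_count (m a b g : nat) (c e d : bool) : nat :=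
  \sum_(0 <= x < 2 ^ m) \sum_(0 <= y < 2 ^ m) carry_ok m a b g c e d x y.

Lemma carry_count0 a b g c e d : carry_count 0 a b g c e d = T (a + c) (b + e) (g + d).
Proof. by rewrite /carry_count expn0 !big_nat1 /carry_ok !lxor0 !divn1 modn1 !add0n. Qed.

Lemma carry_okS k a b g c e d (x0 y0 : bool) x y :
  carry_ok k.+1 a b g c e d (x0 + 2 * x) (y0 + 2 * y) =
  ~~ ((odd a (+) c) (+) (odd b (+) e) (+) (odd g (+) d)) &&
  carry_ok k (a %/ 2) (b %/ 2) (g %/ 2)
    (if odd a (+) c then x0 else odd a) (if odd b (+) e then y0 else odd b)
    (if odd g (+) d then x0 (+) y0 else odd g) x y.
Proof.
rewrite /carry_ok [lxor k.+1 (x0 + _) _]lxorS !odd_bit_double !half_bit_double.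
rewrite !add_low_bit lxorS !odd_bit_double !half_bit_double.
rewrite mod_bit_double !div_bit_double eq_bit_double andbA; congr (_ && _ && _).
by case: x0; case: y0; case: (odd a); case: (odd b); case: (odd g); case: c; case: e; case: d.
Qed.

Lemma carry_countS k a b g c e d :
  carry_count k.+1 a b g c e d =
  ~~ ((odd a (+) c) (+) (odd b (+) e) (+) (odd g (+) d)) *
  \sum_(x0 : bool) \sum_(y0 : bool)
    carry_count k (a %/ 2) (b %/ 2) (g %/ 2)
      (if odd a (+) c then x0 else odd a) (if odd b (+) e then y0 else odd b)
      (if odd g (+) d then x0 (+) y0 else odd g).
Proof.
rewrite /carry_count expnS sum_nat_parity big_distrr; apply: eq_bigr => x0 _.
under eq_big_nat => x _ do rewrite sum_nat_parity.
rewrite exchange_big big_distrr; apply: eq_bigr => y0 _.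
rewrite big_distrr; apply: eq_big_nat => x _; rewrite big_distrr.
by apply: eq_big_nat => y _; rewrite carry_okS /= mulnb.
Qed.

Hypothesis T_toggle_l : forall p q r, T p.+1 q r = ~~ T p q r.
Hypothesis T_toggle_r : forall p q r, T p q.+1 r = ~~ T p q r.

(* The bounds on the sums over two free carries are what closes the induction. *)
Lemma carry_count_bound k a b g :
  let S := carry_bound k a false + carry_bound k a true in
  [/\ forall c e d, carry_count k a b g c e d <= carry_bound k a c,
      forall d, \sum_(c : bool) \sum_(e : bool) carry_count k a b g c e d <= S,
      forall e, \sum_(c : bool) \sum_(d : bool) carry_count k a b g c e d <= S
    & forall c, \sum_(e : bool) \sum_(d : bool) carry_count k a b g c e d <= S].
Proof.
elim: k a b g => [|k IH] a b g S.
  split=> [c e d|d|e|c]; rewrite ?big_bool !carry_count0 /= ?leq_b1 //;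
  by rewrite ?addn0 ?addn1 ?T_toggle_l ?T_toggle_r; case: (T _ _ _); case: (T _ _ _).
have [cnt face_ce face_cd face_ed] := IH (a %/ 2) (b %/ 2) (g %/ 2).
have cnt0 := cnt (odd a) (odd b) (odd g); have ce0 := face_ce (odd g).
have cd0 := face_cd (odd b); have ed0 := face_ed (odd a).
rewrite !big_bool /= in ce0 cd0 ed0.
have sum_le := carry_bound_sum_le k (a %/ 2) (odd a).
split=> [c e d|d|e|c].
- rewrite carry_countS /=.
  by case: (odd a (+) c); case: (odd b (+) e); case: (odd g (+) d); rewrite /= !big_bool /=; lia.
- rewrite /S carry_bound_sumS (sum_bool2_addb (odd a) (odd b)) !big_bool.
  rewrite !carry_countS !addKb.
  by case: (odd g (+) d); rewrite /= !big_bool /=; lia.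
- rewrite /S carry_bound_sumS (sum_bool2_addb (odd a) (odd g)) !big_bool.
  rewrite !carry_countS !addKb.
  by case: (odd b (+) e); rewrite /= !big_bool /=; lia.
- rewrite /S carry_bound_sumS (sum_bool2_addb (odd b) (odd g)) !big_bool.
  rewrite !carry_countS !addKb.
  by case: (odd a (+) c); rewrite /= !big_bool /=; lia.
Qed.

Hypothesis T_diag : forall p, T p p 0.

Lemma carry_count_diag k a :
  (forall c, carry_count k a a 0 c c false = carry_bound k a c) /\
  \sum_(c : bool) \sum_(e : bool) carry_count k a a 0 c e false =
    carry_bound k a false + carry_bound k a true.
Proof.
elim: k a => [|k IH] a.
  split=> [c|]; rewrite ?big_bool !carry_count0 /= ?addn0 ?T_diag //.
  by rewrite addn1 T_toggle_l T_toggle_r T_diag.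
have [cnt face] := IH (a %/ 2); have cnt0 := cnt (odd a).
rewrite !big_bool /= in face.
split=> [c|].
- by rewrite carry_countS /= div0n; case: (odd a (+) c); rewrite /= !big_bool /=; lia.
- rewrite carry_bound_sumS (sum_bool2_addb (odd a) (odd a)) !big_bool !carry_countS !addKb.
  by rewrite /= div0n !big_bool /=; lia.
Qed.

End CarryCount.

Definition xor_msb_ok (p q r : nat) : bool := odd p (+) odd q == odd r.

Definition xr_lsb_ok (s : bool) (p q r : nat) : bool := odd p (+) odd q == s.

Lemma xor_msb_okSl p q r : xor_msb_ok p.+1 q r = ~~ xor_msb_ok p q r.
Proof. by rewrite /xor_msb_ok oddS; case: (odd p); case: (odd q); case: (odd r). Qed.

Lemma xor_msb_okSr p q r : xor_msb_ok p q.+1 r = ~~ xor_msb_ok p q r.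
Proof. by rewrite /xor_msb_ok oddS; case: (odd p); case: (odd q); case: (odd r). Qed.

Lemma xor_msb_ok_diag p : xor_msb_ok p p 0.
Proof. by rewrite /xor_msb_ok addbb. Qed.

Lemma xr_lsb_okSl s p q r : xr_lsb_ok s p.+1 q r = ~~ xr_lsb_ok s p q r.
Proof. by rewrite /xr_lsb_ok oddS; case: (odd p); case: (odd q); case: s. Qed.

Lemma xr_lsb_okSr s p q r : xr_lsb_ok s p q.+1 r = ~~ xr_lsb_ok s p q r.
Proof. by rewrite /xr_lsb_ok oddS; case: (odd p); case: (odd q); case: s. Qed.

Lemma xr_lsb_ok_diag p : xr_lsb_ok false p p 0.
Proof. by rewrite /xr_lsb_ok addbb. Qed.

Lemma xor_eq_carry_ok m a b g (xt yt : bool) x y : x < 2 ^ m -> y < 2 ^ m ->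
  (xorv m.+1 (addv m.+1 (xt * 2 ^ m + x) a) (addv m.+1 (yt * 2 ^ m + y) b) ==
   addv m.+1 (xorv m.+1 (xt * 2 ^ m + x) (yt * 2 ^ m + y)) g) =
  carry_ok xor_msb_ok m a b g false false false x y.
Proof.
move=> lt_x lt_y; have pos : 0 < 2 ^ m by rewrite expn_gt0.
rewrite /addv !xorvE !lxor_mod -[lxor m.+1 (_ + a) _](modn_small (lxor_lt _ _ _)).
rewrite eqn_mod_pow2S !lxorSr -!addnA !lxor_mulDl !modnMDl !divnMDl //.
rewrite (divn_small lt_x) (divn_small lt_y) (divn_small (lxor_lt _ _ _)).
rewrite (modn_small (lxor_lt _ _ _)) /carry_ok /xor_msb_ok !addn0 !oddD !oddb.
congr (_ && _); rewrite addbACA.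
by case: (xt (+) yt) => //=; case: (_ (+) _); case: (odd _).
Qed.

(* The rotation brings the top bit of the xor down to bit 0, so the bit 0 of g is
   absorbed there and only g %/ 2 remains for the m low bits. *)
Lemma xr_eq_carry_ok m a b g (xt yt : bool) x y : x < 2 ^ m -> y < 2 ^ m ->
  (xr m.+1 1 (addv m.+1 (xt * 2 ^ m + x) a) (addv m.+1 (yt * 2 ^ m + y) b) ==
   addv m.+1 (xr m.+1 1 (xt * 2 ^ m + x) (yt * 2 ^ m + y)) g) =
  carry_ok (xr_lsb_ok (odd g)) m a b (g %/ 2) false false (odd g && (xt (+) yt)) x y.
Proof.
move=> lt_x lt_y; have pos : 0 < 2 ^ m by rewrite expn_gt0.
rewrite /xr /addv !xorvE !lxor_mod !rotl1_lxor add_low_bit0 mod_bit_double eq_bit_double.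
rewrite -!addnA !lxor_mulDl !divnMDl // (divn_small lt_x) (divn_small lt_y) !addn0.
rewrite andbC /carry_ok /xr_lsb_ok !addn0 !oddD !oddb addnA; congr (_ && _).
by rewrite addbACA; case: (xt (+) yt) => //=; case: (_ (+) _); case: (odd _).
Qed.

Definition adp_count n (f : nat -> nat -> nat) (a b g : nat) : nat :=
  #|[set p : 'I_(2 ^ n) * 'I_(2 ^ n) |
     f (addv n p.1 a) (addv n p.2 b) == addv n (f p.1 p.2) g]|.

Lemma adpE n f a b g : adp n f a b g = ((adp_count n f a b g)%:R / (4 ^ n)%:R)%R.
Proof. by []. Qed.

Lemma adp_count_xor m a b g :
  adp_count m.+1 (xorv m.+1) a b g = 4 * carry_count xor_msb_ok m a b g false false false.
Proof.
rewrite /adp_count (@card_pairs _ (fun x y => xorv m.+1 (addv m.+1 x a) (addv m.+1 y b) ==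
  addv m.+1 (xorv m.+1 x y) g)) sum_pairs_split_top.
rewrite (eq_bigr (fun=> 2 * carry_count xor_msb_ok m a b g false false false)).
  by rewrite big_bool /=; lia.
move=> xt _; rewrite (eq_bigr (fun=> carry_count xor_msb_ok m a b g false false false)).
  by rewrite big_bool /=; lia.
move=> yt _; apply: eq_big_nat => x /andP[_ lt_x]; apply: eq_big_nat => y /andP[_ lt_y].
by rewrite xor_eq_carry_ok.
Qed.

Lemma adp_count_xr m a b g :
  adp_count m.+1 (xr m.+1 1) a b g = \sum_(xt : bool) \sum_(yt : bool)
    carry_count (xr_lsb_ok (odd g)) m a b (g %/ 2) false false (odd g && (xt (+) yt)).
Proof.
rewrite /adp_count (@card_pairs _ (fun x y => xr m.+1 1 (addv m.+1 x a) (addv m.+1 y b) ==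
  addv m.+1 (xr m.+1 1 x y) g)) sum_pairs_split_top.
apply: eq_bigr => xt _; apply: eq_bigr => yt _.
apply: eq_big_nat => x /andP[_ lt_x]; apply: eq_big_nat => y /andP[_ lt_y].
by rewrite xr_eq_carry_ok.
Qed.

Lemma max_adp_attained n f a (b0 g0 : 'I_(2 ^ n)) :
  (forall b g : 'I_(2 ^ n), adp_count n f a b g <= adp_count n f a b0 g0) ->
  max_adp n f a = adp n f a b0 g0.
Proof.
have adp_ge0 b g : (0 <= adp n f a b g)%R by rewrite adpE divr_ge0 ?ler0n.
move=> opt; apply/le_anti/andP; split.
  apply: bigmax_le => // b _; apply: bigmax_le => // g _.
  by rewrite !adpE ler_pM2r ?invr_gt0 ?ltr0n ?expn_gt0 // ler_nat.
by apply: (bigmax_sup b0) => //; apply: (bigmax_sup g0).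
Qed.

Theorem corollary3 (n : nat) (hn : 2 <= n) (a : 'I_(2 ^ n)) :
  max_adp n (xr n 1) a = adp n (xorv n) a a 0
  /\ adp n (xorv n) a a 0 = max_adp n (xorv n) a.
Proof.
case: n hn a => [//|m] _ a; have pos : 0 < 2 ^ m.+1 by rewrite expn_gt0.
pose opt := 4 * carry_bound m a false.
have xor_le b g : adp_count m.+1 (xorv m.+1) a b g <= opt.
  have [cnt _ _ _] := carry_count_bound xor_msb_okSl xor_msb_okSr m a b g.
  by rewrite adp_count_xor leq_mul2l cnt orbT.
have xor_opt : adp_count m.+1 (xorv m.+1) a a 0 = opt.
  have [cnt _] := carry_count_diag xor_msb_okSl xor_msb_okSr xor_msb_ok_diag m a.
  by rewrite adp_count_xor cnt.
have xr_le b g : adp_count m.+1 (xr m.+1 1) a b g <= opt.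
  have [cnt _ _ _] :=
    carry_count_bound (xr_lsb_okSl (odd g)) (xr_lsb_okSr (odd g)) m a b (g %/ 2).
  rewrite adp_count_xr !big_bool /=.
  by move: (cnt false false (odd g)) (cnt false false false); case: (odd g) => /=; lia.
have xr_opt : adp_count m.+1 (xr m.+1 1) a a 0 = opt.
  have [cnt _] := carry_count_diag (xr_lsb_okSl false) (xr_lsb_okSr false) xr_lsb_ok_diag m a.
  by rewrite adp_count_xr /= div0n !big_bool /= cnt /opt; lia.
split.
  rewrite (max_adp_attained (b0 := a) (g0 := Ordinal pos)) => [|b g].
    by rewrite !adpE xr_opt xor_opt.
  by rewrite xr_opt.
rewrite (max_adp_attained (b0 := a) (g0 := Ordinal pos)) // => b g.
by rewrite xor_opt.
Qed.
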